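(* Let $0<\alpha\le\delta<\infty$ and let $p\in\mathcal M_1^+$ with $a(p)\in X_{\alpha,\delta}$. Then for all $0\le q\le q'\le1$ one has $a(\mathcal R_q(p))_k\le a(\mathcal R_{q'}(p))_k$ for all $k\in\mathbb N_0$. In particular, $a(\mathcal R_q(p))\in X_{\alpha,\delta}$ for all $0\le q\le1$.
   Context: $\mathcal M_1^+$ is the set of probability measures on $\mathbb N_0$, identified with nonnegative sequences summing to $1$. For $q\in[0,1]$, $$T^{(q)}_{ij,k\ell}=C^{(q)}_{k\ell}\,\delta_{i+j,k+\ell}\,(1+\min\{k,\ell,i,j\})\,q^{\max\{0,\ \min\{k,\ell\}-\min\{i,j\}\}},$$ with $0^0=1$ and $C^{(q)}_{k\ell}>0$ chosen so that $\sum_{i,j\ge0}T^{(q)}_{ij,k\ell}=1$; $\mathcal R_q(p)_i=\sum_{j,k,\ell\ge0}T^{(q)}_{ij,k\ell}p_kp_\ell$. For $p\in\mathcal M_1^+$, $a(p)_k=\frac{1}{k+1}\sum_{\ell\ge k}\binom{\ell}{k}p_\ell\in[0,\infty]$. $X_{\alpha,\delta}$ is the set of real sequences $a$ with $a_0=1$, $a_1=\alpha$, $0\le a_k\le\delta^k$ for $k\ge2$. *)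

(* R : realType, extended reals \bar R for
   nonnegative infinite series (which always exist in [0, +oo]). *)
From mathcomp Require Import all_boot all_order all_algebra.
From mathcomp Require Import all_classical all_reals all_analysis.
Set Implicit Arguments. Unset Strict Implicit. Unset Printing Implicit Defensive.
Import Order.TTheory GRing.Theory Num.Theory.
Local Open Scope ring_scope.
Local Open Scope ereal_scope.

Section Defs.
Variable R : realType.

(* unnormalized weight: delta_{i+j,k+l} (1+min{k,l,i,j}) q^{max(0, min{k,l}-min{i,j})};
   truncated nat subtraction gives max{0,.}, and q ^+ 0 = 1 (so 0^0 = 1). *)
Definition Tw (q : R) (i j k l : nat) : R :=
  (i + j == k + l)%N%:R * (1 + minn (minn k l) (minn i j))%N%:R
  * q ^+ (minn k l - minn i j)%N.

(* normalizing constant: sum_{i,j>=0} of the weight equals 1/C; only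
   i,j <= k+l contribute because of the Kronecker delta. *)
Definition Cq (q : R) (k l : nat) : R :=
  (\sum_(i < (k + l).+1) \sum_(j < (k + l).+1) Tw q i j k l)^-1.

Definition T (q : R) (i j k l : nat) : R := Cq q k l * Tw q i j k l.

Definition M1plus (p : nat -> R) : Prop :=
  (forall n, (0 <= p n)%R) /\ \sum_(n <oo) (p n)%:E = 1.

Definition Rq (q : R) (p : nat -> R) (i : nat) : \bar R :=
  \sum_(j <oo) \sum_(k <oo) \sum_(l <oo) (T q i j k l * p k * p l)%:E.

Definition aseq (p : nat -> \bar R) (k : nat) : \bar R :=
  ((k.+1%:R)^-1)%:E * \sum_(k <= l <oo) ('C(l, k)%:R)%:E * p l.

Definition Xad (alpha delta : R) (a : nat -> \bar R) : Prop :=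
  a 0%N = 1 /\ a 1%N = alpha%:E /\
  (forall k, (2 <= k)%N -> 0 <= a k /\ a k <= (delta ^+ k)%:E).

End Defs.

(* Since a(p)_m = (m+1)^-1 sum_i C(i,m) p_i, one finds
   a(R_q p)_m = sum_{k,l} p_k p_l E_q[C(I,m)] / (m+1), where, given (k,l), the
   index I ranges over 0..k+l with weights
   w_q(i) = (1 + min(k,l,i,k+l-i)) q^(min(k,l) - min(i,k+l-i)), symmetric about
   (k+l)/2.  The ratio w_q'/w_q (q <= q') is nonincreasing in the distance
   min(i,k+l-i) of i to the ends of [0,k+l], and so is the symmetrised moment
   C(i,m) + C(k+l-i,m) by convexity of binomials; a Chebyshev-type sum
   inequality then makes E_q[C(I,m)] nondecreasing in q.  The moments of order
   0 and 1 do not depend on q (mass and mean are conserved).  At q = 1, I is the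
   sum of independent uniform variables on 0..k and 0..l, so Vandermonde's
   identity gives a(R_1 p)_m = (m+1)^-1 sum_j a_j a_(m-j) <= delta^m. *)

From mathcomp Require Import all_boot all_order all_algebra.
From mathcomp Require Import all_classical all_reals all_analysis.
From mathcomp Require Import zify ring lra.
Import Order.TTheory GRing.Theory Num.Theory.

Set Implicit Arguments.
Unset Strict Implicit.
Unset Printing Implicit Defensive.

Definition edge_dist (n i : nat) : nat := minn i (n - i).

Lemma edge_dist_subn n i : i <= n -> edge_dist n (n - i) = edge_dist n i.
Proof. by move=> ?; rewrite /edge_dist subKn // minnC. Qed.

Section BinomialSymmetricSum.
Variable m : nat.

Lemma bin_sym_sum_step n s : s.+1 <= n - s.+1 ->
  'C(s.+1, m) + 'C(n - s.+1, m) <= 'C(s, m) + 'C(n - s, m).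
Proof.
case: m => [|m'] h; first by rewrite !bin0.
have -> : n - s = (n - s.+1).+1 by lia.
have := leq_bin2l m' (ltnW h); rewrite !binS; lia.
Qed.

Lemma bin_sym_sum_antimono n s s' : s <= s' -> s' <= n - s' ->
  'C(s', m) + 'C(n - s', m) <= 'C(s, m) + 'C(n - s, m).
Proof.
move=> h; rewrite -(subnKC h).
elim: (s' - s) => [|d IH]; first by rewrite addn0.
rewrite addnS => h'; apply: leq_trans (bin_sym_sum_step h') (IH _); lia.
Qed.

Lemma bin_sym_sum_edge_antimono n i j : i <= n -> j <= n ->
  edge_dist n i <= edge_dist n j ->
  'C(j, m) + 'C(n - j, m) <= 'C(i, m) + 'C(n - i, m).
Proof.
have sym s : s <= n -> 'C(s, m) + 'C(n - s, m) =
    'C(edge_dist n s, m) + 'C(n - edge_dist n s, m).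
  by rewrite /edge_dist => ?; case: leqP => // _; rewrite subKn // addnC.
move=> /sym -> /sym -> hij; apply: bin_sym_sum_antimono => //.
rewrite /edge_dist; lia.
Qed.

End BinomialSymmetricSum.

Lemma bin_hockey_stick k j : \sum_(x < k.+1) 'C(x, j) = 'C(k.+1, j.+1).
Proof.
elim: k => [|k IH]; first by rewrite big_ord1 binS bin0n.
by rewrite big_ord_recr /= IH [RHS]binS.
Qed.

Lemma sum_bin_addn k l m :
  \sum_(x < k.+1) \sum_(y < l.+1) 'C(x + y, m) =
  \sum_(j < m.+1) 'C(k.+1, j.+1) * 'C(l.+1, (m - j).+1).
Proof.
under eq_bigr => x _ do under eq_bigr => y _ do rewrite -binomial.Vandermonde.
under eq_bigr => x _ do rewrite exchange_big.
rewrite exchange_big; apply: eq_bigr => j _.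
by rewrite -!bin_hockey_stick big_distrlr.
Qed.

Lemma count_addn_eq x l i : \sum_(y < l.+1) (x + y == i) = (x <= i <= x + l).
Proof.
elim: l => [|l IH]; first by rewrite big_ord1 /=; case: eqP; lia.
by rewrite big_ord_recr /= IH; case: eqP; case: leqP; case: leqP => /=; lia.
Qed.

Lemma count_addn_pair_eq k l i :
  \sum_(x < k.+1) \sum_(y < l.+1) (x + y == i) = (minn k i).+1 - (i - l).
Proof.
elim: k => [|k IH]; first by rewrite big_ord1 count_addn_eq /=; case: leqP; lia.
by rewrite big_ord_recr /= IH count_addn_eq; case: leqP; case: leqP => /=; lia.
Qed.

Local Open Scope ring_scope.

Lemma sum_ord_addn (V : nmodType) (f : nat -> V) k l :
  \sum_(x < k.+1) \sum_(y < l.+1) f (x + y)%N =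
  \sum_(i < (k + l)%N.+1) f i *+ (1 + minn (minn k l) (edge_dist (k + l) i))%N.
Proof.
have pick x y : (x < k.+1)%N -> (y < l.+1)%N ->
    f (x + y)%N = \sum_(i < (k + l)%N.+1) f i *+ ((x + y)%N == i).
  move=> hx hy; rewrite (eq_bigr (fun i : 'I_(k + l)%N.+1 =>
    if i == (x + y)%N :> nat then f i else 0)); last first.
    by move=> i _; rewrite mulrb eq_sym.
  by rewrite -big_mkcond big_ord1_eq ifT //; lia.
under eq_bigr => x _ do under eq_bigr => y _ do rewrite (pick x y) //.
under eq_bigr => x _ do rewrite exchange_big.
rewrite exchange_big; apply: eq_bigr => i _.
under eq_bigr => x _ do rewrite sumrMnr.
rewrite sumrMnr count_addn_pair_eq /edge_dist; congr (_ *+ _).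
have := ltn_ord i; lia.
Qed.

Section Ordered.
Variable R : realDomainType.

Lemma exprn_cross_le (x y : R) (a b : nat) : 0 <= x -> x <= y -> (b <= a)%N ->
  x ^+ a * y ^+ b <= y ^+ a * x ^+ b.
Proof.
move=> x0 xy ba; have y0 := le_trans x0 xy.
rewrite -(subnK ba) !exprD -!mulrA [y ^+ b * _]mulrC.
by rewrite ler_wpM2r ?mulr_ge0 ?exprn_ge0 // lerXn2r.
Qed.

(* Chebyshev's sum inequality for two weightings in monotone likelihood ratio
   order. *)
Lemma mean_le_of_mlr (I : finType) (key : I -> nat) (f w w' : I -> R) :
  (forall i j, (key i <= key j)%N -> f j <= f i) ->
  (forall i j, (key i <= key j)%N -> w i * w' j <= w' i * w j) ->
  (\sum_i f i * w i) * (\sum_i w' i) <= (\sum_i f i * w' i) * (\sum_i w i).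
Proof.
move=> f_anti w_mlr; pose c i j := w i * w' j - w' i * w j.
have cross : (\sum_i f i * w i) * (\sum_i w' i) -
    (\sum_i f i * w' i) * (\sum_i w i) = \sum_i \sum_j f i * c i j.
  rewrite !mulr_suml -sumrB; apply: eq_bigr => i _.
  by rewrite !mulr_sumr -sumrB; apply: eq_bigr => j _; rewrite /c; ring.
have swap : \sum_i \sum_j f i * c i j = - \sum_i \sum_j f j * c i j.
  rewrite exchange_big -sumrN; apply: eq_bigr => i _.
  by rewrite -sumrN; apply: eq_bigr => j _; rewrite /c; ring.
(* Since [c] is antisymmetric, twice the left-hand difference of [cross] is
   the sum of the [(f i - f j) * c i j], each of which is nonpositive. *)
have : \sum_i \sum_j (f i - f j) * c i j <= 0.
  apply: sumr_le0 => i _; apply: sumr_le0 => j _; rewrite /c.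
  have [kij | /ltnW kji] := leqP (key i) (key j).
    by rewrite mulr_ge0_le0 ?subr_ge0 ?subr_le0 ?f_anti ?w_mlr.
  have := w_mlr _ _ kji; rewrite mulrC [w' j * _]mulrC => wji.
  by rewrite mulr_le0_ge0 ?subr_le0 ?subr_ge0 ?f_anti.
have -> : \sum_i \sum_j (f i - f j) * c i j =
    \sum_i \sum_j f i * c i j - \sum_i \sum_j f j * c i j.
  rewrite -sumrB; apply: eq_bigr => i _.
  by rewrite -sumrB; apply: eq_bigr => j _; rewrite mulrBl.
lra.
Qed.

End Ordered.

Lemma bin_diag_ratio (R : numFieldType) n j :
  'C(n.+1, j.+1)%:R / n.+1%:R = 'C(n, j)%:R / j.+1%:R :> R.
Proof.
apply/eqP; rewrite eqr_div ?pnatr_eq0 // -!natrM mulnC -mul_bin_diag.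
by rewrite mulnC.
Qed.

Section Kernel.
Variable R : realType.
Implicit Types (q : R) (i j k l m : nat).

Definition wt q k l i : R :=
  (1 + minn (minn k l) (edge_dist (k + l) i))%N%:R *
  q ^+ (minn k l - edge_dist (k + l) i)%N.

Definition wt_sum q k l : R := \sum_(i < (k + l)%N.+1) wt q k l i.

Definition bin_moment q m k l : R :=
  \sum_(i < (k + l)%N.+1) \sum_(j < (k + l)%N.+1) 'C(i, m)%:R * T q i j k l.

Lemma wt_ge0 q k l i : 0 <= q -> 0 <= wt q k l i.
Proof. by move=> q0; rewrite mulr_ge0 ?exprn_ge0. Qed.

Lemma wt_subn q k l i : (i <= k + l)%N -> wt q k l (k + l - i)%N = wt q k l i.
Proof. by move=> ?; rewrite /wt edge_dist_subn. Qed.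

Lemma wt_sum_gt0 q k l : 0 <= q -> 0 < wt_sum q k l.
Proof.
move=> q0; have hk : (k < (k + l).+1)%N by rewrite ltnS leq_addr.
rewrite /wt_sum (bigD1 (Ordinal hk)) //= ltr_pwDl ?sumr_ge0 // => [|i _].
  by rewrite /wt /edge_dist addKn minnn subnn mulr1 ltr0n.
exact: wt_ge0.
Qed.

Lemma sum_wt_sym (f : nat -> R) q k l :
  2 * \sum_(i < (k + l)%N.+1) f i * wt q k l i =
  \sum_(i < (k + l)%N.+1) (f i + f (k + l - i)%N) * wt q k l i.
Proof.
rewrite mulr2n mulrDl mul1r {2}(reindex_inj rev_ord_inj) -big_split /=.
by apply: eq_bigr => i _; rewrite subSS wt_subn ?mulrDl // -ltnS.
Qed.

Lemma wt_cross_le q q' k l i j : 0 <= q -> q <= q' ->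
  (edge_dist (k + l) i <= edge_dist (k + l) j)%N ->
  wt q k l i * wt q' k l j <= wt q' k l i * wt q k l j.
Proof.
move=> q0 qq' hij; rewrite /wt mulrACA [leRHS]mulrACA.
by rewrite ler_wpM2l ?mulr_ge0 // exprn_cross_le // leq_sub2l.
Qed.

Lemma Tw_eq0 q i j k l : (i + j != k + l)%N -> Tw q i j k l = 0.
Proof. by rewrite /Tw => /negbTE ->; rewrite !mul0r. Qed.

Lemma sum_Tw q i k l : (i <= k + l)%N ->
  \sum_(j < (k + l)%N.+1) Tw q i j k l = wt q k l i.
Proof.
move=> hi; have hj : (k + l - i < (k + l).+1)%N by rewrite ltnS leq_subr.
rewrite (bigD1 (Ordinal hj)) //= big1 => [|j /eqP ne]; last first.
  by apply/Tw_eq0/eqP => e; apply: ne; apply: val_inj => /=; lia.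
by rewrite addr0 /Tw /wt subnKC // eqxx mul1r.
Qed.

Lemma Cq_wt_sum q k l : Cq q k l = (wt_sum q k l)^-1.
Proof. by congr _^-1; apply: eq_bigr => i _; rewrite sum_Tw // -ltnS. Qed.

Lemma T_ge0 q i j k l : 0 <= q -> 0 <= T q i j k l.
Proof.
move=> q0; rewrite /T Cq_wt_sum mulr_ge0 //.
  by rewrite invr_ge0 ltW // wt_sum_gt0.
by rewrite /Tw !mulr_ge0 ?exprn_ge0.
Qed.

Lemma bin_moment_ge0 q m k l : 0 <= q -> 0 <= bin_moment q m k l.
Proof.
by move=> q0; do 2!(apply: sumr_ge0 => ? _); rewrite mulr_ge0 ?T_ge0.
Qed.

Lemma bin_momentE q m k l : bin_moment q m k l =
  (\sum_(i < (k + l)%N.+1) 'C(i, m)%:R * wt q k l i) / wt_sum q k l.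
Proof.
rewrite mulr_suml; apply: eq_bigr => i _.
under eq_bigr do rewrite /T Cq_wt_sum mulrCA.
by rewrite -mulr_sumr -mulr_sumr sum_Tw 1?mulrC // -ltnS.
Qed.

Lemma bin_moment0 q k l : 0 <= q -> bin_moment q 0%N k l = 1.
Proof.
move=> q0; rewrite bin_momentE; under eq_bigr do rewrite bin0 mul1r.
by rewrite mulfV // gt_eqF // wt_sum_gt0.
Qed.

Lemma bin_moment1 q k l : 0 <= q -> bin_moment q 1%N k l = (k + l)%N%:R / 2.
Proof.
move=> q0; rewrite bin_momentE; under eq_bigr do rewrite bin1.
have mean2 : 2 * \sum_(i < (k + l)%N.+1) i%:R * wt q k l i =
    (k + l)%N%:R * wt_sum q k l.
  rewrite (sum_wt_sym (fun i => i%:R)) mulr_sumr.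
  by apply: eq_bigr => i _; rewrite -natrD subnKC // -ltnS.
have D0 := lt0r_neq0 (wt_sum_gt0 k l q0).
apply: (mulfI (_ : 2 != 0)); first by rewrite pnatr_eq0.
by rewrite mulrA mean2 mulfK // mulrCA divff ?pnatr_eq0 ?mulr1.
Qed.

Lemma bin_moment_mono q q' m k l : 0 <= q -> q <= q' ->
  bin_moment q m k l <= bin_moment q' m k l.
Proof.
move=> q0 qq'; have q'0 := le_trans q0 qq'.
rewrite !bin_momentE ler_pdivrMr ?wt_sum_gt0 // mulrAC.
rewrite ler_pdivlMr ?wt_sum_gt0 // -(@ler_pM2l _ 2) ?ltr0n // !mulrA.
rewrite !(sum_wt_sym (fun i => 'C(i, m)%:R)) /wt_sum.
apply: (mean_le_of_mlr (key := fun i : 'I_(k + l)%N.+1 => edge_dist (k + l) i))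
  => i j hij.
  by rewrite -!natrD ler_nat bin_sym_sum_edge_antimono // -ltnS.
exact: wt_cross_le.
Qed.

Lemma bin_moment_at1 m k l : bin_moment 1 m k l =
  \sum_(j < m.+1)
    'C(k, j)%:R / j.+1%:R * ('C(l, (m - j)%N)%:R / (m - j)%N.+1%:R).
Proof.
have num m' : \sum_(i < (k + l)%N.+1) 'C(i, m')%:R * wt 1 k l i =
    (\sum_(j < m'.+1) 'C(k.+1, j.+1) * 'C(l.+1, (m' - j).+1))%N%:R.
  rewrite -sum_bin_addn natr_sum; under [RHS]eq_bigr do rewrite natr_sum.
  rewrite (sum_ord_addn (fun i => 'C(i, m')%:R)).
  by apply: eq_bigr => i _; rewrite /wt expr1n mulr1 mulr_natr.
have total : wt_sum 1 k l = (k.+1 * l.+1)%N%:R.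
  have := num 0%N; rewrite big_ord1 sub0n !bin1 => <-.
  by apply: eq_bigr => i _; rewrite bin0 mul1r.
rewrite bin_momentE num total natr_sum mulr_suml; apply: eq_bigr => j _.
by rewrite !natrM invfM mulrACA !bin_diag_ratio.
Qed.

End Kernel.

Local Open Scope ereal_scope.

Section Series.
Variable R : realType.
Implicit Types (p : nat -> R) (q : R).

Lemma nneseries_trunc (f : nat -> \bar R) N : (forall k, 0 <= f k) ->
  (forall k, (N <= k)%N -> f k = 0) -> \sum_(k <oo) f k = \sum_(k < N) f k.
Proof.
move=> f0 fz; rewrite (nneseries_split 0 N) // add0n eseries0 => [|k hk _].
  by rewrite adde0 big_mkord.
exact: fz.
Qed.

Lemma nneseriesZl3 (x : R) (h : nat -> nat -> nat -> R) : (0 <= x)%R ->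
  (forall i j k, 0 <= h i j k)%R ->
  x%:E * \sum_(i <oo) \sum_(j <oo) \sum_(k <oo) (h i j k)%:E =
  \sum_(i <oo) \sum_(j <oo) \sum_(k <oo) (x * h i j k)%:E.
Proof.
move=> x0 h0; have h0E i j k : 0 <= (h i j k)%:E by rewrite lee_fin.
rewrite -nneseriesZl => [|i _]; last by do 2!(apply: nneseries_ge0 => ? _ _).
apply: eq_eseriesr => i _.
rewrite -nneseriesZl => [|j _]; last exact: nneseries_ge0.
by apply: eq_eseriesr => j _; rewrite -nneseriesZl.
Qed.

Lemma nneseries_swap2 (G : nat -> nat -> nat -> nat -> \bar R) :
  (forall i j k l, 0 <= G i j k l) ->
  \sum_(i <oo) \sum_(j <oo) \sum_(k <oo) \sum_(l <oo) G i j k l =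
  \sum_(k <oo) \sum_(l <oo) \sum_(i <oo) \sum_(j <oo) G i j k l.
Proof.
move=> G0.
have S0 (f : nat -> \bar R) : (forall n, 0 <= f n) -> 0 <= \sum_(n <oo) f n.
  by move=> f0; apply: nneseries_ge0 => n _ _.
transitivity (\sum_(i <oo) \sum_(k <oo) \sum_(l <oo) \sum_(j <oo) G i j k l).
  apply: eq_eseriesr => i _.
  rewrite nneseries_interchange => [|j k]; last exact: S0.
  by apply: eq_eseriesr => k _; rewrite nneseries_interchange.
rewrite nneseries_interchange => [|i k]; last by apply: (S0) => l; exact: S0.
apply: eq_eseriesr => k _.
by rewrite nneseries_interchange // => i l; exact: S0.
Qed.

Lemma nneseries_mul (x y : nat -> R) : (forall n, 0 <= x n)%R ->
  (forall n, 0 <= y n)%R -> \sum_(l <oo) (y l)%:E \is a fin_num ->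
  \sum_(k <oo) \sum_(l <oo) (x k * y l)%:E =
  (\sum_(k <oo) (x k)%:E) * \sum_(l <oo) (y l)%:E.
Proof.
move=> x0 y0 /fineK yE.
rewrite -[in RHS]yE muleC -nneseriesZl => [|k _]; last by rewrite lee_fin.
apply: eq_eseriesr => k _.
rewrite muleC yE -nneseriesZl => [|l _]; last by rewrite lee_fin.
by apply: eq_eseriesr.
Qed.

Lemma aseqE (u : nat -> \bar R) m : (forall n, 0 <= u n) ->
  aseq u m = \sum_(l <oo) (('C(l, m)%:R / m.+1%:R)%:E * u l).
Proof.
move=> u0; rewrite [RHS](nneseries_split 0 m) => [|l _]; last first.
  by rewrite mule_ge0 // lee_fin divr_ge0.
rewrite add0n big1_seq ?add0e => [|l /andP [_]]; last first.
  by rewrite mem_index_iota => /andP [_ hl]; rewrite bin_small // mul0r mul0e.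
rewrite /aseq -nneseriesZl => [|l _]; last by rewrite mule_ge0 ?lee_fin.
by apply: eq_eseriesr => l _; rewrite muleA -EFinM mulrC.
Qed.

Lemma aseq_ge0 (u : nat -> \bar R) m : (forall n, 0 <= u n) -> 0 <= aseq u m.
Proof.
move=> u0; rewrite mule_ge0 ?lee_fin ?invr_ge0 // nneseries_ge0 // => l _ _.
by rewrite mule_ge0 ?lee_fin.
Qed.

Lemma Rq_term_ge0 q p i j k l : (0 <= q)%R -> (forall n, 0 <= p n)%R ->
  (0 <= T q i j k l * p k * p l)%R.
Proof. by move=> q0 p0; rewrite mulr_ge0 ?p0 // mulr_ge0 ?p0 ?T_ge0. Qed.

Lemma Rq_ge0 q p i : (0 <= q)%R -> (forall n, 0 <= p n)%R -> 0 <= Rq q p i.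
Proof.
move=> q0 p0; do 3!(apply: nneseries_ge0 => ? _ _).
by rewrite lee_fin Rq_term_ge0.
Qed.

Lemma aseq_Rq q p m : (0 <= q)%R -> (forall n, 0 <= p n)%R ->
  aseq (Rq q p) m =
  \sum_(k <oo) \sum_(l <oo) (p k * p l * (bin_moment q m k l / m.+1%:R))%:E.
Proof.
move=> q0 p0; pose c i : R := ('C(i, m)%:R / m.+1%:R)%R.
have c0 i : (0 <= c i)%R by rewrite divr_ge0.
have t0 i j k l : (0 <= c i * (T q i j k l * p k * p l))%R.
  by rewrite mulr_ge0 ?Rq_term_ge0.
rewrite aseqE => [|i]; last exact: Rq_ge0.
transitivity (\sum_(i <oo) \sum_(j <oo) \sum_(k <oo) \sum_(l <oo)
    (c i * (T q i j k l * p k * p l))%:E).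
  apply: eq_eseriesr => i _.
  by apply: nneseriesZl3 => // j k l; exact: Rq_term_ge0.
rewrite nneseries_swap2 => [|i j k l]; last by rewrite lee_fin.
apply: eq_eseriesr => k _; apply: eq_eseriesr => l _.
have Tz i j : (k + l < i + j)%N -> T q i j k l = 0%R.
  by move=> h; rewrite /T Tw_eq0 ?mulr0 //; apply/eqP; lia.
have row i : \sum_(j <oo) (c i * (T q i j k l * p k * p l))%:E =
    (\sum_(j < (k + l).+1) c i * (T q i j k l * p k * p l))%:E.
  rewrite -sumEFin; apply: nneseries_trunc => j; first by rewrite lee_fin.
  by move=> hj; rewrite Tz ?mul0r ?mulr0 //; lia.
rewrite (eq_eseriesr (fun i _ => row i)).
rewrite (nneseries_trunc (N := (k + l).+1)) => [|i|i hi].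
- rewrite sumEFin /bin_moment mulr_suml mulr_sumr; congr EFin.
  apply: eq_bigr => i _.
  rewrite mulr_suml mulr_sumr; apply: eq_bigr => j _; rewrite /c; ring.
- by rewrite lee_fin sumr_ge0.
- by rewrite big1 // => j _; rewrite Tz ?mul0r ?mulr0 //; lia.
Qed.

Lemma aseq_Rq_mono q q' p m : (0 <= q)%R -> (q <= q')%R ->
  (forall n, 0 <= p n)%R -> aseq (Rq q p) m <= aseq (Rq q' p) m.
Proof.
move=> q0 qq' p0; have q'0 := le_trans q0 qq'.
have t0 r k l : (0 <= r)%R ->
    0 <= (p k * p l * (bin_moment r m k l / m.+1%:R))%:E.
  by move=> r0; rewrite lee_fin !mulr_ge0 ?bin_moment_ge0 ?invr_ge0.
rewrite !aseq_Rq //; apply: lee_nneseries => [k _ _|k _].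
  by apply: nneseries_ge0 => l _ _; exact: t0.
apply: lee_nneseries => [l _ _|l _]; first exact: t0.
rewrite lee_fin ler_wpM2l ?mulr_ge0 // ler_wpM2r ?invr_ge0 //.
exact: bin_moment_mono.
Qed.

Lemma aseq_Rq0 q p : (0 <= q)%R -> M1plus p -> aseq (Rq q p) 0%N = 1.
Proof.
move=> q0 [p0 p1]; rewrite aseq_Rq //.
under eq_eseriesr do under eq_eseriesr do rewrite bin_moment0 // divr1 mulr1.
by rewrite nneseries_mul ?p1 // mule1.
Qed.

Lemma aseq_Rq1 q p : (0 <= q)%R -> M1plus p ->
  aseq (Rq q p) 1%N = aseq (fun n => (p n)%:E) 1%N.
Proof.
move=> q0 [p0 p1]; pose A k := (k%:R * p k / 4)%R.
have A0 k : (0 <= A k)%R by rewrite /A !mulr_ge0.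
have e0 k l : 0 <= (A k * p l)%:E by rewrite lee_fin mulr_ge0.
have halves k l : (p k * p l * (bin_moment q 1%N k l / 2%:R))%:E =
    (A k * p l)%:E + (A l * p k)%:E.
  by rewrite bin_moment1 // -EFinD /A natrD; congr EFin; field.
rewrite aseq_Rq //; transitivity (\sum_(k <oo) \sum_(l <oo) (A k * p l)%:E +
    \sum_(k <oo) \sum_(l <oo) (A l * p k)%:E).
  rewrite -nneseriesD => [|k _ _|k _ _]; try by apply: nneseries_ge0 => l _ _.
  apply: eq_eseriesr => k _; rewrite -nneseriesD => [|l _ _|l _ _] //.
  by apply: eq_eseriesr => l _; exact: halves.
rewrite [X in _ + X]nneseries_interchange // nneseries_mul ?p1 // mule1.
rewrite -nneseriesD => [|k _ _|k _ _]; rewrite ?lee_fin //.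
rewrite aseqE => [|n]; last by rewrite lee_fin.
by apply: eq_eseriesr => k _; rewrite -EFinD -EFinM bin1 /A; congr EFin; field.
Qed.

Section Convolution.
Variable p : nat -> R.
Hypothesis p0 : forall n, (0 <= p n)%R.
Local Notation a := (aseq (fun n => (p n)%:E)).

Lemma aseq_R1 m : (forall j, a j \is a fin_num) ->
  aseq (Rq 1 p) m = (m.+1%:R^-1)%:E * \sum_(j < m.+1) a j * a (m - j)%N.
Proof.
move=> afin; pose b n j : R := ('C(n, j)%:R / j.+1%:R)%R.
pose t k l j : R := (b k j * p k * (b l (m - j)%N * p l))%R.
have bp0 n j : (0 <= b n j * p n)%R by rewrite mulr_ge0 ?divr_ge0.
have t0 k l j : 0 <= (t k l j)%:E by rewrite lee_fin mulr_ge0.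
have aE j : a j = \sum_(n <oo) (b n j * p n)%:E.
  by rewrite aseqE => [|n]; [apply: eq_eseriesr | rewrite lee_fin].
have conv : \sum_(j < m.+1) a j * a (m - j)%N =
    \sum_(k <oo) \sum_(l <oo) \sum_(j < m.+1) (t k l j)%:E.
  symmetry; transitivity
      (\sum_(k <oo) \sum_(j < m.+1) \sum_(l <oo) (t k l j)%:E).
    by apply: eq_eseriesr => k _; apply: nneseries_sum => j l _.
  transitivity (\sum_(j < m.+1) \sum_(k <oo) \sum_(l <oo) (t k l j)%:E).
    by apply: nneseries_sum => j k _; apply: nneseries_ge0 => l _ _.
  apply: eq_bigr => j _; rewrite !aE.
  by apply: nneseries_mul => //; rewrite -aE.
have term k l : (p k * p l * (bin_moment 1 m k l / m.+1%:R))%:E =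
    (m.+1%:R^-1)%:E * \sum_(j < m.+1) (t k l j)%:E.
  rewrite bin_moment_at1 sumEFin -EFinM; congr EFin.
  by rewrite mulr_suml !mulr_sumr; apply: eq_bigr => j _; rewrite /t /b; ring.
rewrite aseq_Rq ?ler01 // conv -nneseriesZl => [|k _]; last first.
  by apply: nneseries_ge0 => l _ _; exact: sume_ge0.
apply: eq_eseriesr => k _; rewrite -nneseriesZl => [|l _]; last exact: sume_ge0.
by apply: eq_eseriesr => l _; exact: term.
Qed.

Lemma aseq_R1_le_expr (d : R) m : (forall j, a j <= (d ^+ j)%:E) ->
  aseq (Rq 1 p) m <= (d ^+ m)%:E.
Proof.
move=> ad; have a0 j : 0 <= a j by apply: aseq_ge0 => n; rewrite lee_fin.
have d0 : (0 <= d)%R by rewrite -lee_fin -(expr1 d) (le_trans (a0 1%N)).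
have afin j : a j \is a fin_num.
  by rewrite ge0_fin_numE // (le_lt_trans (ad j)) ?ltry.
have aa j : (j <= m)%N -> a j * a (m - j)%N <= (d ^+ m)%:E.
  move=> jm; rewrite -(subnKC jm) addKn exprD EFinM.
  by rewrite lee_pmul.
have -> : (d ^+ m)%:E = (m.+1%:R^-1)%:E * \sum_(j < m.+1) (d ^+ m)%:E.
  rewrite sumEFin sumr_const card_ord -(mulr_natl (d ^+ m)) -EFinM.
  by rewrite mulKf ?pnatr_eq0.
rewrite aseq_R1 // lee_wpmul2l ?lee_fin ?invr_ge0 // lee_sum // => j _.
by rewrite aa // -ltnS.
Qed.

End Convolution.

Lemma Xad_le_expr (alpha delta : R) (a : nat -> \bar R) : (alpha <= delta)%R ->
  Xad alpha delta a -> forall j, a j <= (delta ^+ j)%:E.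
Proof.
move=> ad [a0 [a1 ak]] [|[|j]]; first by rewrite a0 expr0.
  by rewrite a1 expr1 lee_fin.
exact: (ak j.+2 isT).2.
Qed.

End Series.

Unset Implicit Arguments.

Theorem proposition16 (R : realType) (alpha delta : R) (p : nat -> R) :
  (0 < alpha)%R -> (alpha <= delta)%R ->
  M1plus p -> Xad alpha delta (aseq (fun n => (p n)%:E)) ->
  (forall q q' : R, (0 <= q)%R -> (q <= q')%R -> (q' <= 1)%R ->
     forall k : nat, aseq (Rq q p) k <= aseq (Rq q' p) k) /\
  (forall q : R, (0 <= q)%R -> (q <= 1)%R -> Xad alpha delta (aseq (Rq q p))).
Proof.
move=> _ alpha_delta Mp X; have p0 := Mp.1.
have mono q q' k : (0 <= q)%R -> (q <= q')%R ->
    aseq (Rq q p) k <= aseq (Rq q' p) k.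
  by move=> q0 qq'; exact: aseq_Rq_mono.
split=> [q q' q0 qq' _ k|q q0 q1]; first exact: mono.
split; first exact: aseq_Rq0.
split; first by rewrite aseq_Rq1 //; case: X => _ [].
move=> k _; split; first by apply: aseq_ge0 => i; exact: Rq_ge0.
apply: le_trans (mono _ _ _ q0 q1) _.
exact (aseq_R1_le_expr p0 k (Xad_le_expr alpha_delta X)).
Qed.
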